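(* Let $B\ge1$ and $\mathcal{E}>0$. Let $\widetilde{\mathbf{t}}=(\widetilde t_0,\dots,\widetilde t_{B-1})$ be the optimal solution of $$\text{minimize}_{\mathbf{t}}\ \sum_{b=0}^{B-1}4^b\exp(-2t_b)\quad\text{subject to}\quad\sum_{b=0}^{B-1}4t_b\le\mathcal{E},\ \ t_b\ge0,$$ (i.e. the duration subproblem with currents fixed at $i_b=2$), which is given by $\widetilde t_b=0$ if $\nu\ge 4^b/2$ and $\widetilde t_b=\tfrac12\log\bigl(\tfrac{1}{\nu}\cdot\tfrac{4^b}{2}\bigr)$ otherwise, with $\nu$ the dual variable of the energy constraint. If $\mathcal{E}>2B(B-1)\log 2$, then $\widetilde t_b>0$ for all $b\in\{0,\dots,B-1\}$ and $$\widetilde t_b=\frac{\mathcal{E}}{4B}+\Bigl(b-\frac{B-1}{2}\Bigr)\log 2.$$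
   Context: $\log$ denotes the natural logarithm. *)

From mathcomp Require Import all_boot all_order all_algebra.
From mathcomp Require Import all_classical all_reals all_analysis.
Set Implicit Arguments. Unset Strict Implicit. Unset Printing Implicit Defensive.
Import Order.TTheory GRing.Theory Num.Theory.
Local Open Scope ring_scope.

Definition dur_objective (R : realType) (B : nat) (t : 'I_B -> R) : R :=
  \sum_(b < B) (4 : R) ^+ b * expR (- 2 * t b).

Definition dur_feasible (R : realType) (B : nat) (E : R) (t : 'I_B -> R) : Prop :=
  \sum_(b < B) 4 * t b <= E /\ (forall b, 0 <= t b).

Definition dur_optimal (R : realType) (B : nat) (E : R) (t : 'I_B -> R) : Prop :=
  dur_feasible E t /\
  (forall s : 'I_B -> R, dur_feasible E s -> dur_objective t <= dur_objective s).

From mathcomp Require Import all_boot all_order all_algebra.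
From mathcomp Require Import all_classical all_reals all_analysis.
From mathcomp Require Import ring lra.
Set Implicit Arguments. Unset Strict Implicit. Unset Printing Implicit Defensive.
Import Order.TTheory GRing.Theory Num.Theory.
Local Open Scope ring_scope.

(* The closed form s is the point where every term 4^b exp(-2 s_b) takes the
   same value c and the energy budget is spent exactly; the bound on E is what
   makes its smallest entry s_0 positive, so s is feasible.  Convexity of exp
   then gives, for any u with sum 4 u_b <= E,
     f(u) - f(s) >= sum_b c (exp(-2 d_b) - 1 + 2 d_b) >= 0,   d = u - s,
   with equality only if d = 0; so an optimal t satisfies f(t) <= f(s) and
   must equal s. *)

Lemma sumr_ord_double (R : comPzRingType) (n : nat) :
  (\sum_(i < n) (i%:R : R)) * 2 = n%:R * (n%:R - 1).
Proof.
elim: n => [|n IH]; first by rewrite big_ord0 !mul0r.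
by rewrite big_ord_recr /= mulrDl IH -natr1; ring.
Qed.

Section DurationSubproblem.

Variables (R : realType) (B : nat) (E : R).
Hypothesis B_gt0 : (0 < B)%N.

Definition dur_equalizer (b : 'I_B) : R :=
  E / (4 * B%:R) + ((b : nat)%:R - (B%:R - 1) / 2) * ln 2.

Definition dur_level : R := expR (- E / (2 * B%:R) + (B%:R - 1) * ln 2).

Let B_neq0 : (B%:R : R) != 0. Proof. by rewrite pnatr_eq0 -lt0n. Qed.

Lemma sum_dur_equalizer : \sum_(b < B) 4 * dur_equalizer b = E.
Proof.
transitivity (\sum_(b < B) (E / B%:R + ((b : nat)%:R * 2) * (2 * ln 2)
                            - 2 * (B%:R - 1) * ln 2)).
  by apply: eq_bigr => b _; rewrite /dur_equalizer; field.
rewrite sumrB big_split /= -!mulr_suml sumr_ord_double !sumr_const card_ord.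
by rewrite -[E *+ B]mulr_natr -[2 *+ B]mulr_natr; field.
Qed.

Lemma dur_equalizer_gt0 (b : 'I_B) :
  2 * B%:R * (B%:R - 1) * ln 2 < E -> 0 < dur_equalizer b.
Proof.
move=> hE; have B_gt0R : (0 : R) < B%:R by rewrite ltr0n.
have ln2_ge0 : (0 : R) <= ln 2 by rewrite ln_ge0 // ler1n.
have first_gt0 : 0 < E / (4 * B%:R) - (B%:R - 1) / 2 * ln 2.
  rewrite subr_gt0 ltr_pdivlMr; last by lra.
  by rewrite (_ : _ * (4 * B%:R) = 2 * B%:R * (B%:R - 1) * ln 2) //; field.
have : 0 <= (b : nat)%:R * ln (2 : R) by rewrite mulr_ge0 ?ler0n.
rewrite /dur_equalizer; lra.
Qed.

Lemma dur_term_level (u : R) (b : 'I_B) :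
  (4 : R) ^+ b * expR (- 2 * u) = dur_level * expR (- 2 * (u - dur_equalizer b)).
Proof.
have -> : (4 : R) = expR (2 * ln 2).
  by rewrite -[X in expR (X * _)]/(2%:R) expRM_natl lnK ?posrE // expr2; lra.
by rewrite -expRM_natl -expRD /dur_level -expRD /dur_equalizer; congr expR; field.
Qed.

Lemma dur_objective_equalizer : dur_objective dur_equalizer = B%:R * dur_level.
Proof.
rewrite /dur_objective.
under eq_bigr => b _ do rewrite dur_term_level subrr mulr0 expR0 mulr1.
by rewrite sumr_const card_ord mulr_natl.
Qed.

Lemma dur_objective_expansion (u : 'I_B -> R) :
  dur_objective u = B%:R * dur_level + dur_level / 2 * (E - \sum_(b < B) 4 * u b)
    + \sum_(b < B) dur_level * (expR (- 2 * (u b - dur_equalizer b))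
                                - (1 + - 2 * (u b - dur_equalizer b))).
Proof.
have -> : B%:R * dur_level = \sum_(b < B) dur_level.
  by rewrite sumr_const card_ord mulr_natl.
rewrite -{1}sum_dur_equalizer -sumrB mulr_sumr -!big_split /=.
by apply: eq_bigr => b _; rewrite dur_term_level; field.
Qed.

Lemma dur_objective_le_equalizer (u : 'I_B -> R) :
  \sum_(b < B) 4 * u b <= E -> dur_objective u <= B%:R * dur_level ->
  forall b, u b = dur_equalizer b.
Proof.
move=> u_energy u_le b; set d := fun b => u b - dur_equalizer b.
have level_gt0 : 0 < dur_level := expR_gt0 _.
have gap_ge0 b' : 0 <= dur_level * (expR (- 2 * d b') - (1 + - 2 * d b')).
  by rewrite mulr_ge0 ?subr_ge0 ?expR_ge1Dx // ltW.
have energy_ge0 : 0 <= dur_level / 2 * (E - \sum_(b < B) 4 * u b).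
  by rewrite mulr_ge0 ?subr_ge0 // divr_ge0 // ltW.
have gaps_eq0 : \sum_(b < B) dur_level * (expR (- 2 * d b) - (1 + - 2 * d b)) = 0.
  apply/eqP; rewrite eq_le sumr_ge0 ?andbT //.
  by move: u_le; rewrite dur_objective_expansion; lra.
have /(_ b isT)/eqP := psumr_eq0P (fun i _ => gap_ge0 i) gaps_eq0.
rewrite mulf_eq0 gt_eqF //= subr_eq0 => /eqP gap_b.
apply/eqP; rewrite -subr_eq0; apply/eqP; apply: contra_eq gap_b => d_neq0.
by rewrite gt_eqF // expR_gt1Dx // mulf_eq0 negb_or oppr_eq0 pnatr_eq0.
Qed.

End DurationSubproblem.

Theorem lemma3 (R : realType) (B : nat) (E : R) (hB : (1 <= B)%N) (hE : 0 < E)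
  (t : 'I_B -> R) :
  dur_optimal E t ->
  2 * B%:R * (B%:R - 1) * ln (2 : R) < E ->
  forall b : 'I_B,
    0 < t b /\
    t b = E / (4 * B%:R) + ((b : nat)%:R - (B%:R - 1) / 2) * ln (2 : R).
Proof.
move=> [[t_energy _] t_opt] hEB b.
have s_feasible : dur_feasible E (dur_equalizer (B := B) E).
  split; first by rewrite (sum_dur_equalizer E hB).
  by move=> b'; apply/ltW/(dur_equalizer_gt0 hB).
have t_le : dur_objective t <= B%:R * dur_level B E.
  by rewrite -(dur_objective_equalizer E hB); apply: t_opt.
have -> := dur_objective_le_equalizer hB t_energy t_le b.
by split; last by []; exact: dur_equalizer_gt0 hB b hEB.
Qed.
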